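(* (a) For every natural number $n\geq1$, the powers $\mathcal{R}_{\mathcal{S}}^{\,n}$ and $\mathcal{I}_{\mathcal{S}}^{\,n}$ have a $\pi$-tree. (b) The countable powers $\mathcal{R}_{\mathcal{S}}^{\,\omega}$ and $\mathcal{I}_{\mathcal{S}}^{\,\omega}$ have a $\pi$-tree.
   Context: $\mathcal{R}_{\mathcal{S}}$ is the Sorgenfrey line (reals with the topology generated by $[a,b)$); $\mathcal{I}_{\mathcal{S}}=\mathcal{R}_{\mathcal{S}}\setminus\mathbb{Q}$ is the irrational Sorgenfrey line (subspace). Powers carry the Tychonoff product topology. Neighbourhoods are not necessarily open. ${}^{<\omega}\omega$ is the set of finite sequences of natural numbers. A tree is a strict partial order in which the set of predecessors of every node is well-ordered; a branch is a maximal chain; $\mathrm{sons}(x)$ is the set of immediate successors of $x$; $0$ denotes the least node. A foliage tree is a pair $\mathbf{F}=(T,l)$ with $T$ a tree (skeleton) and $l$ a function on its nodes, $\mathbf{F}_x:=l(x)$; tree notions apply via the skeleton. $\mathrm{shoot}_{\mathbf{F}}(v)=\{\bigcup_{x\in C}\mathbf{F}_x: C\text{ a cofinite subset of }\mathrm{sons}_{\mathbf{F}}(v)\}$; $\mathrm{scope}_{\mathbf{F}}(p)=\{x:p\in\mathbf{F}_x\}$. $\gamma\gg\delta$ means every nonempty $D\in\delta$ contains some nonempty $G\in\gamma$. $\mathbf{F}$ is locally strict if each non-maximal leaf $\mathbf{F}_x$ is the disjoint union of $\mathbf{F}_s$, $s\in\mathrm{sons}(x)$; has strict branches if it has a node and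 for each branch $B$, $\bigcap_{x\in B}\mathbf{F}_x$ is a singleton; is open in $X$ if all leaves are open in $X$; is a foliage $\omega,\omega$-tree if its skeleton is order-isomorphic to $({}^{<\omega}\omega,\subsetneq)$. A Baire foliage tree on $X$ is an open in $X$, locally strict foliage $\omega,\omega$-tree with strict branches and $\mathbf{F}_{0_{\mathbf{F}}}=X$. $\mathbf{F}$ grows into $X$ if for every $p\in X$ and neighbourhood $U$ of $p$ there is $z\in\mathrm{scope}_{\mathbf{F}}(p)$ with $\mathrm{shoot}_{\mathbf{F}}(z)\gg\{U\}$. A $\pi$-tree on $X$ is a Baire foliage tree on $X$ that grows into $X$; a space has a $\pi$-tree if there is one on it. *)

From Stdlib Require Import Reals List QArith Qreals.
Open Scope R_scope.

Definition sorg_open (U : R -> Prop) : Prop :=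
  forall x, U x -> exists a b, a <= x < b /\ (forall y, a <= y < b -> U y).

Definition irrational (x : R) : Prop := ~ (exists q : Q, x = Q2R q).
Definition Irr : Type := { x : R | irrational x }.
Definition irr_open (V : Irr -> Prop) : Prop :=
  exists U, sorg_open U /\ forall x : Irr, V x <-> U (proj1_sig x).

Definition prod_open {I X : Type} (op : (X -> Prop) -> Prop) (U : (I -> X) -> Prop) : Prop :=
  forall f, U f ->
    exists (L : list I) (V : I -> X -> Prop),
      (forall i, op (V i)) /\ (forall i, In i L -> V i (f i)) /\
      (forall g, (forall i, In i L -> V i (g i)) -> U g).

Definition fin (n : nat) : Type := { i : nat | (i < n)%nat }.

Definition nbhd {X : Type} (op : (X -> Prop) -> Prop) (p : X) (U : X -> Prop) : Prop :=
  exists V, op V /\ V p /\ (forall q, V q -> U q).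

Section Foliage.
Variables (X N : Type) (lt : N -> N -> Prop) (l : N -> X -> Prop).

Definition son (v x : N) : Prop := lt v x /\ ~ (exists y, lt v y /\ lt y x).

Definition is_least (r : N) : Prop := forall x, x = r \/ lt r x.

Definition chain (B : N -> Prop) : Prop :=
  forall x y, B x -> B y -> x = y \/ lt x y \/ lt y x.

Definition branch (B : N -> Prop) : Prop :=
  chain B /\ (forall C, chain C -> (forall x, B x -> C x) -> forall x, C x -> B x).

Definition locally_strict : Prop :=
  forall x, (exists y, lt x y) ->
    (forall p, l x p <-> exists s, son x s /\ l s p) /\
    (forall s s', son x s -> son x s' -> s <> s' -> forall p, ~ (l s p /\ l s' p)).

Definition strict_branches : Prop :=
  inhabited N /\
  forall B, branch B -> exists p, forall q, (forall x, B x -> l x q) <-> q = p.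

Definition open_in (op : (X -> Prop) -> Prop) : Prop := forall x, op (l x).

Definition sprefix (s t : list nat) : Prop := exists u, u <> nil /\ t = s ++ u.

Definition omega_omega_tree : Prop :=
  exists (f : N -> list nat) (g : list nat -> N),
    (forall x, g (f x) = x) /\ (forall s, f (g s) = s) /\
    (forall x y, lt x y <-> sprefix (f x) (f y)).

Definition cofinite_sons (v : N) (C : N -> Prop) : Prop :=
  (forall x, C x -> son v x) /\
  exists L : list N, forall x, son v x -> ~ C x -> In x L.

Definition shoot_refines (v : N) (U : X -> Prop) : Prop :=
  (exists q, U q) ->
  exists C, cofinite_sons v C /\
    (exists q, exists x, C x /\ l x q) /\
    (forall q, (exists x, C x /\ l x q) -> U q).

Definition grows_into (op : (X -> Prop) -> Prop) : Prop :=
  forall p U, nbhd op p U -> exists z, l z p /\ shoot_refines z U.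

Definition baire_foliage_tree (op : (X -> Prop) -> Prop) : Prop :=
  open_in op /\ locally_strict /\ omega_omega_tree /\ strict_branches /\
  exists r, is_least r /\ forall p, l r p.

Definition pi_tree (op : (X -> Prop) -> Prop) : Prop :=
  baire_foliage_tree op /\ grows_into op.
End Foliage.

Definition has_pi_tree {X : Type} (op : (X -> Prop) -> Prop) : Prop :=
  exists (N : Type) (lt : N -> N -> Prop) (l : N -> X -> Prop), pi_tree X N lt l op.

(* A space X carries a pi-tree as soon as there is a bijection Phi : X -> nat^nat
   whose cylinders [s] = {x | Phi x extends s} are open and such that every neighbourhood of a
   point p contains all x that agree with p up to some M and have a large M-th digit: the tree of
   finite sequences, with the cylinders as leaves, is then a pi-tree.
   The Sorgenfrey line and its irrationals have such codings by nested Farey intervals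
   [p1/q1, p2/q2) (q1 p2 - q2 p1 = 1).  At odd depths an interval is cut into pieces accumulating
   at its right end, so that large digits give points just to the right of the coded point, which
   is what Sorgenfrey neighbourhoods need.  For the irrationals the open interval is cut at even
   depths into pieces accumulating at both ends, which keeps every limit point off the rationals.
   A finite or countable power inherits a coding by interleaving the digits of the coordinates in
   rounds; the odd digits of all coordinates read in one round are merged, through a bijection of
   nat^n whose first component is the minimum, into a single digit that bounds them all. *)

From Stdlib Require Import Reals List QArith Qreals ZArith.
From Stdlib Require Import Lia Lra Classical ClassicalEpsilon FunctionalExtensionality
  PropExtensionality ProofIrrelevance.
Import ListNotations.
Open Scope R_scope.

(** * Finite sequences *)

Definition agree (M : nat) (a b : nat -> nat) : Prop := forall i, (i < M)%nat -> a i = b i.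

Definition take_seq (a : nat -> nat) (M : nat) : list nat := map a (seq 0 M).

Lemma take_seq_length a M : length (take_seq a M) = M.
Proof. unfold take_seq. rewrite length_map, length_seq. reflexivity. Qed.

Lemma nth_map_seq {B} (f : nat -> B) k j d : (j < k)%nat -> nth j (map f (seq 0 k)) d = f j.
Proof.
  intros Hj. rewrite nth_indep with (d' := f 0%nat) by (rewrite length_map, length_seq; lia).
  rewrite map_nth, seq_nth by lia. reflexivity.
Qed.

Lemma app_inv_length {A} (a b c d : list A) :
  a ++ b = c ++ d -> length a = length c -> a = c /\ b = d.
Proof.
  revert c. induction a as [|x a IH]; intros [|y c] E L; simpl in *; try lia; auto.
  injection E as -> E. destruct (IH c E ltac:(lia)) as [-> ->]. auto.
Qed.

Lemma nth_take_seq a M i : (i < M)%nat -> nth i (take_seq a M) 0%nat = a i.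
Proof. apply nth_map_seq. Qed.

Lemma take_seq_S a M : take_seq a (S M) = take_seq a M ++ [a M].
Proof. unfold take_seq. rewrite seq_S, map_app. reflexivity. Qed.

Lemma take_seq_cons a M : take_seq a (S M) = a 0%nat :: take_seq (fun i => a (S i)) M.
Proof. unfold take_seq. simpl. rewrite <- seq_shift, map_map. reflexivity. Qed.

Lemma take_seq_eq_iff a b M : take_seq a M = take_seq b M <-> agree M a b.
Proof.
  split.
  - intros E i Hi. rewrite <- (nth_take_seq a M i Hi), <- (nth_take_seq b M i Hi), E. reflexivity.
  - intros H. apply nth_ext with 0%nat 0%nat; rewrite ?take_seq_length; auto.
    intros i Hi. rewrite !nth_take_seq by lia. auto.
Qed.

Definition prefix (s t : list nat) : Prop := exists u, t = s ++ u.

Definition comparable (s t : list nat) : Prop := prefix s t \/ prefix t s.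

Lemma prefix_nil s : prefix [] s.
Proof. exists s. reflexivity. Qed.

Lemma prefix_refl s : prefix s s.
Proof. exists []. rewrite app_nil_r. reflexivity. Qed.

Lemma prefix_app_r s t u : prefix s t -> prefix s (t ++ u).
Proof. intros [v ->]. exists (v ++ u). rewrite app_assoc. reflexivity. Qed.

Lemma prefix_same_length s t : prefix s t -> length s = length t -> s = t.
Proof. intros [[|x u] ->] H; [symmetry; apply app_nil_r|]. rewrite length_app in H. simpl in H. lia. Qed.

Lemma comparable_app_cons s x u y v : comparable (s ++ x :: u) (s ++ y :: v) -> x = y.
Proof.
  intros [[w E]|[w E]]; rewrite <- app_assoc in E; apply app_inv_head in E; injection E; auto.
Qed.

Lemma son_sprefix_iff s t : son (list nat) sprefix s t <-> exists k, t = s ++ [k].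
Proof.
  split.
  - intros [[u [Hu ->]] Hno]. destruct u as [|k [|k' u]]; [congruence| eauto |].
    exfalso. apply Hno. exists (s ++ [k]). split.
    + exists [k]. split; [congruence|reflexivity].
    + exists (k' :: u). split; [congruence|]. rewrite <- app_assoc. reflexivity.
  - intros [k ->]. split.
    + exists [k]. split; [congruence|reflexivity].
    + intros [y [[u [Hu ->]] [v [Hv Heq]]]].
      rewrite <- app_assoc in Heq. apply app_inv_head in Heq.
      destruct u as [|x [|x' u]]; [congruence| |discriminate].
      destruct v; [congruence|discriminate].
Qed.

Lemma chain_sprefix_iff (B : list nat -> Prop) :
  chain (list nat) sprefix B <-> forall s t, B s -> B t -> comparable s t.
Proof.
  split.
  - intros Hc s t Hs Ht. destruct (Hc s t Hs Ht) as [->|[[u [_ ->]]|[u [_ ->]]]].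
    + left. apply prefix_refl.
    + left. exists u. reflexivity.
    + right. exists u. reflexivity.
  - intros H s t Hs Ht. destruct (H s t Hs Ht) as [[[|x u] ->]|[[|x u] ->]].
    1, 3: left; rewrite app_nil_r; reflexivity.
    + right; left. exists (x :: u). split; [congruence|reflexivity].
    + right; right. exists (x :: u). split; [congruence|reflexivity].
Qed.

Lemma branch_absorbs (B : list nat -> Prop) t :
  branch (list nat) sprefix B -> (forall s, B s -> comparable s t) -> B t.
Proof.
  intros [Hc Hmax] Ht. rewrite chain_sprefix_iff in Hc.
  apply (Hmax (fun z => B z \/ z = t)); auto.
  apply chain_sprefix_iff. intros a b [Ha| ->] [Hb| ->].
  - auto.
  - auto.
  - destruct (Ht b Hb); [right|left]; auto.
  - left. apply prefix_refl.
Qed.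

Lemma branch_nil (B : list nat -> Prop) : branch (list nat) sprefix B -> B [].
Proof. intros Hb. apply (branch_absorbs B [] Hb). intros s _. right. apply prefix_nil. Qed.

Lemma branch_snoc (B : list nat -> Prop) s :
  branch (list nat) sprefix B -> B s -> exists k, B (s ++ [k]).
Proof.
  intros Hb Hs. pose proof (proj1 (chain_sprefix_iff B) (proj1 Hb)) as Hc.
  destruct (classic (exists k v, B (s ++ k :: v))) as [[k [v Hkv]]|Hno].
  - exists k. apply (branch_absorbs B _ Hb). intros c Hc0.
    destruct (Hc c s Hc0 Hs) as [Hcs|[[|x u] ->]].
    + left. apply prefix_app_r. exact Hcs.
    + left. rewrite app_nil_r. apply prefix_app_r, prefix_refl.
    + right. rewrite (comparable_app_cons s x u k v (Hc _ _ Hc0 Hkv)).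
      exists u. rewrite <- app_assoc. reflexivity.
  - exists 0%nat. apply (branch_absorbs B _ Hb). intros c Hc0.
    destruct (Hc c s Hc0 Hs) as [Hcs|[[|x u] ->]].
    + left. apply prefix_app_r. exact Hcs.
    + left. rewrite app_nil_r. apply prefix_app_r, prefix_refl.
    + exfalso. eauto.
Qed.

Lemma branch_take_seq (B : list nat -> Prop) :
  branch (list nat) sprefix B -> exists a, forall s, B s <-> s = take_seq a (length s).
Proof.
  intros Hb.
  assert (Hext : forall s, exists k, B s -> B (s ++ [k])).
  { intros s. destruct (classic (B s)) as [Hs|Hs].
    - destruct (branch_snoc B s Hb Hs) as [k Hk]. eauto.
    - exists 0%nat. tauto. }
  destruct (choice _ Hext) as [next Hnext].
  set (c := fix c (M : nat) : list nat := match M with O => [] | S M' => c M' ++ [next (c M')] end).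
  exists (fun M => next (c M)).
  assert (Hc : forall M, c M = take_seq (fun M => next (c M)) M /\ B (c M)).
  { induction M as [|M [IH1 IH2]]; [split; [reflexivity|exact (branch_nil B Hb)]|].
    simpl. rewrite take_seq_S, <- IH1. auto. }
  intros s. destruct (Hc (length s)) as [E Hcs]. rewrite <- E. split.
  - intros Hs. pose proof (proj1 (chain_sprefix_iff B) (proj1 Hb) s _ Hs Hcs) as [P|P].
    + apply prefix_same_length; auto. rewrite E, take_seq_length. reflexivity.
    + symmetry. apply prefix_same_length; auto. rewrite E, take_seq_length. reflexivity.
  - intros ->. exact Hcs.
Qed.

(** * Codings by sequences of naturals *)

Definition cylinder {X : Type} (Phi : X -> nat -> nat) (s : list nat) (x : X) : Prop :=
  take_seq (Phi x) (length s) = s.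

Definition coding {X : Type} (op : (X -> Prop) -> Prop) (Phi : X -> nat -> nat) : Prop :=
  (forall x y, Phi x = Phi y -> x = y) /\ (forall a, exists x, Phi x = a) /\
  (forall s, op (cylinder Phi s)).

Definition large_digit_nbhds {X : Type} (op : (X -> Prop) -> Prop) (Phi : X -> nat -> nat) : Prop :=
  forall p U, nbhd op p U ->
    exists M K, forall x, agree M (Phi x) (Phi p) -> (K <= Phi x M)%nat -> U x.

Lemma cylinder_take_seq {X : Type} (Phi : X -> nat -> nat) a M x :
  cylinder Phi (take_seq a M) x <-> agree M (Phi x) a.
Proof. unfold cylinder. rewrite take_seq_length. apply take_seq_eq_iff. Qed.

Lemma cylinder_snoc {X : Type} (Phi : X -> nat -> nat) s k x :
  cylinder Phi (s ++ [k]) x <-> cylinder Phi s x /\ Phi x (length s) = k.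
Proof.
  unfold cylinder. rewrite length_app, Nat.add_1_r, take_seq_S. split.
  - intros E. apply app_inj_tail in E. exact E.
  - intros [-> ->]. reflexivity.
Qed.

Section CylinderTree.
Variables (X : Type) (op : (X -> Prop) -> Prop) (Phi : X -> nat -> nat).

Lemma cylinder_locally_strict : locally_strict X (list nat) sprefix (cylinder Phi).
Proof.
  intros s _. split.
  - intros p. split.
    + intros Hp. exists (s ++ [Phi p (length s)]).
      split; [apply son_sprefix_iff; eauto | apply cylinder_snoc; auto].
    + intros [t [Ht Hp]]. apply son_sprefix_iff in Ht as [k ->].
      apply cylinder_snoc in Hp. apply Hp.
  - intros t t' Ht Ht' Hne p [Hp Hp'].
    apply son_sprefix_iff in Ht as [k ->]. apply son_sprefix_iff in Ht' as [k' ->].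
    apply cylinder_snoc in Hp as [_ <-]. apply cylinder_snoc in Hp' as [_ <-]. auto.
Qed.

Lemma cylinder_omega_omega : omega_omega_tree (list nat) sprefix.
Proof. exists (fun s => s), (fun s => s). repeat split; auto. Qed.

Lemma cylinder_root : exists r, is_least (list nat) sprefix r /\ forall p, cylinder Phi r p.
Proof.
  exists []. split; [|reflexivity].
  intros [|k u]; [left; reflexivity|]. right. exists (k :: u). split; [congruence|reflexivity].
Qed.

Lemma cylinder_strict_branches :
  (forall x y, Phi x = Phi y -> x = y) -> (forall a, exists x, Phi x = a) ->
  strict_branches X (list nat) sprefix (cylinder Phi).
Proof.
  intros Hinj Hsurj. split; [exact (inhabits [])|].
  intros B HB. destruct (branch_take_seq B HB) as [a Ha].
  destruct (Hsurj a) as [x0 Hx0]. exists x0. intros q. split.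
  - intros Hq. apply Hinj. rewrite Hx0. extensionality M.
    assert (HBM : B (take_seq a (S M))) by (apply Ha; rewrite take_seq_length; reflexivity).
    apply (proj1 (cylinder_take_seq Phi a (S M) q) (Hq _ HBM)). lia.
  - intros -> s Hs. apply Ha in Hs. unfold cylinder. rewrite Hx0. congruence.
Qed.

Lemma cylinder_grows_into :
  (forall a, exists x, Phi x = a) -> large_digit_nbhds op Phi ->
  grows_into X (list nat) sprefix (cylinder Phi) op.
Proof.
  intros Hsurj Hlarge p U HU. destruct (Hlarge p U HU) as [M [K HK]].
  set (z := take_seq (Phi p) M).
  assert (Hz : length z = M) by apply take_seq_length.
  exists z. split; [apply cylinder_take_seq; intros i _; reflexivity|].
  intros _. exists (fun t => exists k, (K <= k)%nat /\ t = z ++ [k]). split; [split|split].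
  - intros t [k [_ ->]]. apply son_sprefix_iff. eauto.
  - exists (map (fun k => z ++ [k]) (seq 0 K)).
    intros t Ht Hn. apply son_sprefix_iff in Ht as [k ->]. apply in_map_iff.
    exists k. split; auto. apply in_seq. split; [lia|].
    destruct (Nat.lt_ge_cases k K); auto. exfalso. eauto.
  - destruct (Hsurj (fun i => if (i <? M)%nat then Phi p i else K)) as [q Hq].
    exists q, (z ++ [K]). split; [eauto|]. apply cylinder_snoc. split.
    + apply cylinder_take_seq. intros i Hi. rewrite Hq. destruct (Nat.ltb_spec i M); [auto|lia].
    + rewrite Hq, Hz, Nat.ltb_irrefl. reflexivity.
  - intros q [t [[k [Hk ->]] Hq]]. apply cylinder_snoc in Hq as [Hq Hqk].
    rewrite Hz in Hqk. apply HK; [apply cylinder_take_seq; exact Hq | lia].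
Qed.

Theorem coding_pi_tree : coding op Phi -> large_digit_nbhds op Phi -> has_pi_tree op.
Proof.
  intros [Hinj [Hsurj Hopen]] Hlarge. exists (list nat), sprefix, (cylinder Phi).
  split; [split; [|split; [|split; [|split]]]|].
  - exact Hopen.
  - apply cylinder_locally_strict.
  - apply cylinder_omega_omega.
  - apply cylinder_strict_branches; auto.
  - apply cylinder_root.
  - apply cylinder_grows_into; auto.
Qed.

End CylinderTree.

(** * Interleaving digit sequences *)

Definition min_split (x m : nat) : nat * nat :=
  if (x <=? m)%nat then (x, 2 * (m - x))%nat else (m, 2 * (x - m) - 1)%nat.

Definition min_join (m r : nat) : nat * nat :=
  if Nat.even r then (m, m + Nat.div2 r)%nat else (m + Nat.div2 (S r), m)%nat.

Lemma fst_min_split x m : fst (min_split x m) = Nat.min x m.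
Proof. unfold min_split. destruct (Nat.leb_spec x m); simpl; lia. Qed.

Lemma min_join_split x m : min_join (fst (min_split x m)) (snd (min_split x m)) = (x, m).
Proof.
  unfold min_split, min_join. destruct (Nat.leb_spec x m); cbn [fst snd].
  - rewrite Nat.even_even, Nat.div2_double. f_equal. lia.
  - replace (2 * (x - m) - 1)%nat with (2 * (x - m - 1) + 1)%nat by lia.
    rewrite Nat.even_odd. replace (S (2 * (x - m - 1) + 1)) with (2 * (x - m))%nat by lia.
    rewrite Nat.div2_double. f_equal. lia.
Qed.

Lemma min_split_join m r : min_split (fst (min_join m r)) (snd (min_join m r)) = (m, r).
Proof.
  unfold min_split, min_join. destruct (Nat.Even_or_Odd r) as [[q ->]|[q ->]].
  - rewrite Nat.even_even, Nat.div2_double. cbn [fst snd].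
    destruct (Nat.leb_spec m (m + q)); [|lia]. f_equal. lia.
  - rewrite Nat.even_odd. replace (S (2 * q + 1)) with (2 * S q)%nat by lia.
    rewrite Nat.div2_double. cbn [fst snd].
    destruct (Nat.leb_spec (m + S q) m); [lia|]. f_equal. lia.
Qed.

Fixpoint min_front (l : list nat) : list nat :=
  match l with
  | [] => []
  | x :: l' =>
      match min_front l' with
      | [] => [x]
      | m :: rs => fst (min_split x m) :: snd (min_split x m) :: rs
      end
  end.

Fixpoint min_unfront_from (m : nat) (rs : list nat) : list nat :=
  match rs with
  | [] => [m]
  | r :: rs' => fst (min_join m r) :: min_unfront_from (snd (min_join m r)) rs'
  end.

Definition min_unfront (l : list nat) : list nat :=
  match l with [] => [] | m :: rs => min_unfront_from m rs end.

Lemma min_front_length l : length (min_front l) = length l.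
Proof.
  induction l as [|x l IH]; [reflexivity|]. simpl.
  destruct (min_front l) as [|m rs]; simpl in *; lia.
Qed.

Lemma min_unfront_front l : min_unfront (min_front l) = l.
Proof.
  induction l as [|x l IH]; [reflexivity|]. simpl.
  destruct (min_front l) as [|m rs]; simpl in IH |- *.
  - rewrite <- IH. reflexivity.
  - rewrite min_join_split. simpl. rewrite IH. reflexivity.
Qed.

Lemma min_front_unfront l : min_front (min_unfront l) = l.
Proof.
  destruct l as [|m rs]; [reflexivity|]. simpl.
  revert m. induction rs as [|r rs IH]; intros m; [reflexivity|].
  simpl. rewrite IH, min_split_join. reflexivity.
Qed.

Lemma min_unfront_length l : length (min_unfront l) = length l.
Proof. rewrite <- (min_front_unfront l) at 2. rewrite min_front_length. reflexivity. Qed.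

Lemma min_front_head_le l y : In y l -> (nth 0 (min_front l) 0 <= y)%nat.
Proof.
  induction l as [|x l IH]; [intros []|]. intros Hy. simpl.
  destruct (min_front l) as [|m rs] eqn:E.
  - destruct Hy as [->|Hy]; [simpl; lia|].
    apply (f_equal (@length nat)) in E. rewrite min_front_length in E.
    destruct l; [destruct Hy|discriminate].
  - simpl in IH |- *. rewrite fst_min_split.
    destruct Hy as [->|Hy]; [lia|]. specialize (IH Hy). lia.
Qed.

(* The odd digits of a round are stored through [min_front], so that a single digit of the
   round bounds all of them from below. *)
Section Interleaving.
Variable width : nat -> nat.
Hypothesis width_pos : forall r, (0 < width r)%nat.
Hypothesis width_le : forall r, (width r <= S r)%nat.
Hypothesis width_mono : forall r r', (r <= r')%nat -> (width r <= width r')%nat.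
Hypothesis width_saturate : forall j r r', (j < width r')%nat -> (j <= r)%nat -> (j < width r)%nat.

Definition round_even (w : nat -> nat -> nat) (r : nat) : list nat :=
  map (fun j => w j (2 * (r - j))%nat) (seq 0 (width r)).

Definition round_odd (w : nat -> nat -> nat) (r : nat) : list nat :=
  map (fun j => w j (S (2 * (r - j)))) (seq 0 (width r)).

Definition round (w : nat -> nat -> nat) (r : nat) : list nat :=
  round_even w r ++ min_front (round_odd w r).

Fixpoint round_start (r : nat) : nat :=
  match r with O => O | S r' => (round_start r' + 2 * width r')%nat end.

Fixpoint locate (p : nat) : nat * nat :=
  match p with
  | O => (O, O)
  | S p' => let (r, o) := locate p' in
            if (S o <? 2 * width r)%nat then (r, S o) else (S r, O)
  end.

Definition interleave (w : nat -> nat -> nat) (p : nat) : nat :=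
  nth (snd (locate p)) (round w (fst (locate p))) 0%nat.

Lemma length_round_even w r : length (round_even w r) = width r.
Proof. unfold round_even. rewrite length_map, length_seq. reflexivity. Qed.

Lemma length_round w r : length (round w r) = (2 * width r)%nat.
Proof.
  unfold round. rewrite length_app, min_front_length, length_round_even.
  unfold round_odd. rewrite length_map, length_seq. lia.
Qed.

Lemma round_start_lt r r' : (r < r')%nat -> (round_start r + 2 * width r <= round_start r')%nat.
Proof.
  induction r' as [|r' IH]; intros H; [lia|]. simpl.
  destruct (Nat.eq_dec r r') as [->|Hne]; [lia|]. specialize (IH ltac:(lia)). lia.
Qed.

Lemma round_start_ge r : (r <= round_start r)%nat.
Proof. induction r as [|r IH]; simpl; [lia|]. specialize (width_pos r). lia. Qed.

Lemma round_start_inj r o r' o' : (o < 2 * width r)%nat -> (o' < 2 * width r')%nat ->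
  (round_start r + o = round_start r' + o')%nat -> r = r' /\ o = o'.
Proof.
  intros H H' E. destruct (Nat.lt_trichotomy r r') as [Hl|[->|Hl]].
  - pose proof (round_start_lt _ _ Hl). lia.
  - lia.
  - pose proof (round_start_lt _ _ Hl). lia.
Qed.

Lemma locate_spec p :
  (snd (locate p) < 2 * width (fst (locate p)))%nat /\
  p = (round_start (fst (locate p)) + snd (locate p))%nat.
Proof.
  induction p as [|p [IH1 IH2]]; [simpl; specialize (width_pos 0); lia|]. cbn [locate].
  destruct (locate p) as [r o]. cbn [fst snd] in IH1, IH2.
  destruct (Nat.ltb_spec (S o) (2 * width r)); cbn [fst snd round_start]; [lia|].
  specialize (width_pos (S r)). lia.
Qed.

Lemma locate_round_start r o : (o < 2 * width r)%nat -> locate (round_start r + o) = (r, o).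
Proof.
  intros H. destruct (locate_spec (round_start r + o)) as [H1 H2].
  destruct (round_start_inj _ _ _ _ H1 H (eq_sym H2)) as [E1 E2].
  rewrite (surjective_pairing (locate _)), E1, E2. reflexivity.
Qed.

Lemma interleave_at w r o :
  (o < 2 * width r)%nat -> interleave w (round_start r + o) = nth o (round w r) 0%nat.
Proof. intros H. unfold interleave. rewrite locate_round_start; auto. Qed.

Lemma nth_round_even w r j : (j < width r)%nat -> nth j (round w r) 0%nat = w j (2 * (r - j))%nat.
Proof.
  intros H. unfold round. rewrite app_nth1 by (rewrite length_round_even; lia).
  unfold round_even. rewrite nth_map_seq by exact H. reflexivity.
Qed.

Lemma nth_round_min w r j :
  (j < width r)%nat -> (nth (width r) (round w r) 0 <= w j (S (2 * (r - j))))%nat.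
Proof.
  intros H. unfold round. rewrite app_nth2 by (rewrite length_round_even; lia).
  rewrite length_round_even, Nat.sub_diag. apply min_front_head_le.
  apply in_map_iff. exists j. split; [reflexivity|]. apply in_seq. lia.
Qed.

Lemma round_inj w w' r : round w r = round w' r -> forall j, (j < width r)%nat ->
  w j (2 * (r - j))%nat = w' j (2 * (r - j))%nat /\ w j (S (2 * (r - j))) = w' j (S (2 * (r - j))).
Proof.
  intros E j Hj. unfold round in E. apply app_inv_length in E as [E1 E2];
    [|rewrite !length_round_even; reflexivity].
  apply (f_equal min_unfront) in E2. rewrite !min_unfront_front in E2.
  apply (f_equal (fun l => nth j l 0%nat)) in E1, E2.
  unfold round_even, round_odd in E1, E2. rewrite !nth_map_seq in E1, E2 by exact Hj. auto.
Qed.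

Lemma round_local w w' r : (forall j t, (j < width r)%nat -> (t <= S (2 * r))%nat -> w j t = w' j t) ->
  round w r = round w' r.
Proof.
  intros H. unfold round, round_even, round_odd. f_equal; [|f_equal];
    apply map_ext_in; intros j Hj; apply in_seq in Hj; apply H; lia.
Qed.

Lemma round_of_interleave w w' r :
  (forall o, (o < 2 * width r)%nat ->
     interleave w (round_start r + o) = interleave w' (round_start r + o)) ->
  round w r = round w' r.
Proof.
  intros H. apply nth_ext with 0%nat 0%nat; rewrite !length_round; [reflexivity|].
  intros o Ho. rewrite <- !interleave_at by exact Ho. auto.
Qed.

Lemma interleave_inj w w' : interleave w = interleave w' ->
  forall r j, (j < width r)%nat ->
    w j (2 * (r - j))%nat = w' j (2 * (r - j))%nat /\ w j (S (2 * (r - j))) = w' j (S (2 * (r - j))).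
Proof.
  intros E r. apply round_inj, round_of_interleave. intros o _. rewrite E. reflexivity.
Qed.

Lemma interleave_ext w w' : (forall r j, (j < width r)%nat -> w j = w' j) -> interleave w = interleave w'.
Proof.
  intros H. extensionality p. unfold interleave. f_equal. apply round_local.
  intros j t Hj _. rewrite (H _ _ Hj). reflexivity.
Qed.

Definition deinterleave (a : nat -> nat) : nat -> nat -> nat :=
  fun j t =>
    let r := (j + Nat.div2 t)%nat in
    let b := map (fun o => a (round_start r + o)%nat) (seq 0 (2 * width r)) in
    if Nat.even t then nth j (firstn (width r) b) 0%nat
    else nth j (min_unfront (skipn (width r) b)) 0%nat.

Lemma round_deinterleave a r :
  round (deinterleave a) r = map (fun o => a (round_start r + o)%nat) (seq 0 (2 * width r)).
Proof.
  set (b := map (fun o => a (round_start r + o)%nat) (seq 0 (2 * width r))).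
  assert (Hb : length b = (2 * width r)%nat) by (unfold b; rewrite length_map, length_seq; reflexivity).
  assert (Hr : forall j, (j < width r)%nat -> (j + (r - j))%nat = r) by (intros j Hj; specialize (width_le r); lia).
  rewrite <- (firstn_skipn (width r) b). unfold round. f_equal.
  - apply nth_ext with 0%nat 0%nat; rewrite length_round_even, ?length_firstn; [lia|].
    intros j Hj. unfold round_even. rewrite nth_map_seq by exact Hj. unfold deinterleave.
    rewrite Nat.even_even, Nat.div2_double, (Hr j Hj). reflexivity.
  - rewrite <- (min_front_unfront (skipn (width r) b)). f_equal.
    apply nth_ext with 0%nat 0%nat; unfold round_odd;
      rewrite length_map, length_seq, ?min_unfront_length, ?length_skipn; [lia|].
    intros j Hj. rewrite nth_map_seq by exact Hj. unfold deinterleave.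
    replace (S (2 * (r - j))) with (2 * (r - j) + 1)%nat by lia.
    rewrite Nat.even_odd, Nat.div2_odd', (Hr j Hj). reflexivity.
Qed.

Lemma interleave_deinterleave a : interleave (deinterleave a) = a.
Proof.
  extensionality p. destruct (locate_spec p) as [Ho Hp]. rewrite Hp.
  rewrite interleave_at, round_deinterleave, nth_map_seq by exact Ho. reflexivity.
Qed.

Lemma interleave_local w w' R :
  (forall j t, (j < width R)%nat -> (t < 2 * R + 2)%nat -> w j t = w' j t) ->
  agree R (interleave w) (interleave w').
Proof.
  intros H p Hp. destruct (locate_spec p) as [_ Hp']. unfold interleave. f_equal.
  assert (HR : (fst (locate p) < R)%nat) by (pose proof (round_start_ge (fst (locate p))); lia).
  apply round_local. intros j t Hj Ht. apply H; [|lia].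
  pose proof (width_mono (fst (locate p)) R ltac:(lia)). lia.
Qed.

Lemma interleave_large_digit w w' R :
  agree (round_start R + width R) (interleave w) (interleave w') ->
  forall j, (j < width R)%nat ->
    agree (S (2 * (R - j))) (w j) (w' j) /\
    (interleave w (round_start R + width R) <= w j (S (2 * (R - j))))%nat.
Proof.
  intros H j Hj. pose proof (width_le R). split.
  - intros t Ht.
    assert (Hq : exists q, (j + q <= R)%nat /\ (t = 2 * q \/ t = S (2 * q) /\ j + q < R)%nat)
      by (destruct (Nat.Even_or_Odd t) as [[q ->]|[q ->]]; exists q; lia).
    destruct Hq as [q [HqR Ht']].
    destruct (Nat.eq_dec (j + q) R) as [Er|Er].
    + assert (Ht2 : t = (2 * (R - j))%nat) by lia. subst t.
      specialize (H (round_start R + j)%nat ltac:(lia)).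
      rewrite !interleave_at, !nth_round_even in H by lia. exact H.
    + assert (Hround : round w (j + q) = round w' (j + q)).
      { apply round_of_interleave. intros o Ho. apply H.
        pose proof (round_start_lt (j + q) R ltac:(lia)). lia. }
      destruct (round_inj _ _ _ Hround j) as [E1 E2]; [apply (width_saturate j _ R); lia|].
      replace (j + q - j)%nat with q in E1, E2 by lia.
      destruct Ht' as [->|[-> _]]; assumption.
  - rewrite interleave_at by lia. apply nth_round_min. exact Hj.
Qed.

End Interleaving.

(** * Powers *)

Definition odd_digit_nbhds {Y : Type} (op : (Y -> Prop) -> Prop) (phi : Y -> nat -> nat) : Prop :=
  forall y V, op V -> V y -> exists N, forall j, (N <= j)%nat -> exists K, forall y',
    agree (S (2 * j)) (phi y') (phi y) -> (K <= phi y' (S (2 * j)))%nat -> V y'.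

Definition has_odd_digit_coding {Y : Type} (op : (Y -> Prop) -> Prop) : Prop :=
  exists phi, coding op phi /\ odd_digit_nbhds op phi.

Section ProductCoding.
Variables (Y : Type) (opY : (Y -> Prop) -> Prop) (phi : Y -> nat -> nat).
Hypothesis phi_coding : coding opY phi.
Hypothesis phi_nbhds : odd_digit_nbhds opY phi.

Variables (I : Type) (e : I -> nat) (d : nat -> I) (width : nat -> nat).
Hypothesis d_e : forall i, d (e i) = i.
Hypothesis width_spec : forall j r, (j < width r)%nat <-> (j <= r)%nat /\ exists i, e i = j.

Lemma e_lt_width i r : (e i <= r)%nat -> (e i < width r)%nat.
Proof. intros H. apply width_spec. eauto. Qed.

Lemma e_d j r : (j < width r)%nat -> e (d j) = j.
Proof. intros H. apply width_spec in H as [_ [i <-]]. rewrite d_e. reflexivity. Qed.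

Lemma width_pos r : (0 < width r)%nat.
Proof.
  assert (H0 : (0 < width (e (d 0)))%nat) by (pose proof (e_lt_width (d 0) _ (le_n _)); lia).
  apply width_spec in H0 as [_ Hi]. apply width_spec. split; [lia|exact Hi].
Qed.

Lemma width_le r : (width r <= S r)%nat.
Proof.
  destruct (Nat.le_gt_cases (width r) (S r)) as [|H]; [assumption|].
  apply width_spec in H. lia.
Qed.

Lemma width_mono r r' : (r <= r')%nat -> (width r <= width r')%nat.
Proof.
  intros H. destruct (Nat.le_gt_cases (width r) (width r')) as [|Hlt]; [assumption|].
  apply width_spec in Hlt as [Hr Hi].
  assert (Habs : (width r' < width r')%nat) by (apply width_spec; split; [lia|exact Hi]). lia.
Qed.

Lemma width_saturate j r r' : (j < width r')%nat -> (j <= r)%nat -> (j < width r)%nat.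
Proof. intros H Hj. apply width_spec in H as [_ Hi]. apply width_spec. auto. Qed.

Definition rows (x : I -> Y) : nat -> nat -> nat := fun j => phi (x (d j)).

Definition prod_code (x : I -> Y) : nat -> nat := interleave width (rows x).

Lemma prod_code_inj x x' : prod_code x = prod_code x' -> x = x'.
Proof.
  intros E. extensionality i. apply (proj1 phi_coding). extensionality t.
  assert (Hrow : forall q, rows x (e i) (2 * q)%nat = rows x' (e i) (2 * q)%nat /\
                           rows x (e i) (S (2 * q)) = rows x' (e i) (S (2 * q))).
  { intros q. pose proof (interleave_inj width width_pos _ _ E (e i + q) (e i)
      (e_lt_width i (e i + q) ltac:(lia))) as H.
    replace (e i + q - e i)%nat with q in H by lia. exact H. }
  unfold rows in Hrow. rewrite d_e in Hrow.
  destruct (Nat.Even_or_Odd t) as [[q ->]|[q ->]]; [|rewrite Nat.add_1_r]; apply Hrow.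
Qed.

Lemma prod_code_surj a : exists x, prod_code x = a.
Proof.
  set (w := deinterleave width a).
  destruct (choice (fun i y => phi y = w (e i))
              (fun i => proj1 (proj2 phi_coding) (w (e i)))) as [x Hx].
  exists x. unfold prod_code. rewrite <- (interleave_deinterleave width width_pos width_le a).
  apply interleave_ext. intros r j Hj. unfold rows. rewrite Hx, (e_d j r Hj). reflexivity.
Qed.

Lemma prod_cylinder_open s : prod_open opY (cylinder prod_code s).
Proof.
  intros f Hf.
  exists (map d (seq 0 (width (length s)))),
    (fun i => cylinder phi (take_seq (phi (f i)) (2 * length s + 2))).
  split; [|split].
  - intros i. apply (proj2 (proj2 phi_coding)).
  - intros i _. apply cylinder_take_seq. intros t _. reflexivity.
  - intros g Hg. unfold cylinder in Hf |- *. rewrite <- Hf at 2. apply take_seq_eq_iff.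
    apply (interleave_local width width_pos width_mono). intros j t Hj Ht.
    assert (Hd : In (d j) (map d (seq 0 (width (length s))))) by (apply in_map, in_seq; lia).
    exact (proj1 (cylinder_take_seq _ _ _ _) (Hg (d j) Hd) t Ht).
Qed.

Lemma common_round (p : I -> Y) (L : list I) (V : I -> Y -> Prop) :
  (forall i, opY (V i)) -> (forall i, In i L -> V i (p i)) ->
  exists R0, forall R, (R0 <= R)%nat -> exists K, forall i, In i L ->
    (e i <= R)%nat /\ forall y', agree (S (2 * (R - e i))) (phi y') (phi (p i)) ->
      (K <= phi y' (S (2 * (R - e i))))%nat -> V i y'.
Proof.
  intros Hop. induction L as [|i L IH]; intros HL.
  - exists 0%nat. intros R _. exists 0%nat. intros i [].
  - destruct IH as [R1 HR1]; [intros i' Hi'; apply HL; right; exact Hi'|].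
    destruct (phi_nbhds (p i) (V i) (Hop i) (HL i (or_introl eq_refl))) as [N HN].
    exists (Nat.max R1 (e i + N)). intros R HR.
    destruct (HR1 R ltac:(lia)) as [K1 HK1]. destruct (HN (R - e i)%nat ltac:(lia)) as [K2 HK2].
    exists (Nat.max K1 K2). intros i' [<-|Hi'].
    + split; [lia|]. intros y' H1 H2. apply HK2; [exact H1|lia].
    + destruct (HK1 i' Hi') as [H0 H1]. split; [exact H0|].
      intros y' H2 H3. apply H1; [exact H2|lia].
Qed.

Lemma prod_large_digit_nbhds : large_digit_nbhds (prod_open opY) prod_code.
Proof.
  intros p U [V0 [HV0 [HpV0 HVU]]].
  destruct (HV0 p HpV0) as [L [V [Hop [HL Hbox]]]].
  destruct (common_round p L V Hop HL) as [R HR]. destruct (HR R (le_n R)) as [K HK].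
  exists (round_start width R + width R)%nat, K. intros x Hx HKx. apply HVU, Hbox.
  intros i Hi. destruct (HK i Hi) as [Hle HV].
  destruct (interleave_large_digit width width_pos width_le width_saturate (rows x) (rows p) R Hx
    (e i) (e_lt_width i R Hle)) as [G1 G2].
  assert (Hrow : forall z, rows z (e i) = phi (z i)) by (intros z; unfold rows; rewrite d_e; reflexivity).
  rewrite !Hrow in G1. rewrite Hrow in G2. apply HV; [exact G1|].
  unfold prod_code in HKx. lia.
Qed.

Theorem product_pi_tree : has_pi_tree (@prod_open I Y opY).
Proof.
  apply (coding_pi_tree _ _ prod_code).
  - split; [exact prod_code_inj|split; [exact prod_code_surj|exact prod_cylinder_open]].
  - exact prod_large_digit_nbhds.
Qed.

End ProductCoding.

Lemma fin_power_pi_tree {Y : Type} (op : (Y -> Prop) -> Prop) n :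
  (1 <= n)%nat -> has_odd_digit_coding op -> has_pi_tree (@prod_open (fin n) Y op).
Proof.
  intros Hn [phi [Hcod Hnb]].
  set (d := fun j : nat => match lt_dec j n with
                           | left h => exist (fun i => (i < n)%nat) j h
                           | right _ => exist (fun i => (i < n)%nat) 0%nat Hn end).
  apply (product_pi_tree Y op phi Hcod Hnb (fin n) (@proj1_sig nat _) d (fun r => Nat.min (S r) n)).
  - intros [i hi]. unfold d. simpl. destruct (lt_dec i n) as [h|h]; [|lia].
    f_equal. apply proof_irrelevance.
  - intros j r. cbv beta. split.
    + intros H. assert (Hjn : (j < n)%nat) by lia.
      split; [lia|]. exists (exist (fun i => (i < n)%nat) j Hjn). reflexivity.
    + intros [Hj [[i hi] <-]]. cbn [proj1_sig] in *. lia.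
Qed.

Lemma nat_power_pi_tree {Y : Type} (op : (Y -> Prop) -> Prop) :
  has_odd_digit_coding op -> has_pi_tree (@prod_open nat Y op).
Proof.
  intros [phi [Hcod Hnb]].
  apply (product_pi_tree Y op phi Hcod Hnb nat (fun i => i) (fun i => i) S); [reflexivity|].
  intros j r. split; [intros H; split; [lia|eauto] | intros [H _]; lia].
Qed.

(** * Codings from nested schemes *)

Section NestedScheme.
Variables (Y : Type) (op : (Y -> Prop) -> Prop) (scheme : list nat -> Y -> Prop).
Hypothesis scheme_nil : forall y, scheme [] y.
Hypothesis scheme_cover : forall s y, scheme s y -> exists k, scheme (s ++ [k]) y.
Hypothesis scheme_disjoint : forall s k k' y, scheme (s ++ [k]) y -> scheme (s ++ [k']) y -> k = k'.
Hypothesis scheme_nested : forall s k y, scheme (s ++ [k]) y -> scheme s y.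
Hypothesis scheme_point : forall a, exists! y, forall M, scheme (take_seq a M) y.
Hypothesis scheme_open : forall s, op (scheme s).
Hypothesis scheme_odd_nbhds : forall y V, op V -> V y -> exists N, forall j, (N <= j)%nat ->
  forall s, length s = S (2 * j) -> scheme s y ->
    exists K, forall k y', (K <= k)%nat -> scheme (s ++ [k]) y' -> V y'.

Definition next_digit (s : list nat) (y : Y) : nat :=
  epsilon (inhabits 0%nat) (fun k => scheme (s ++ [k]) y).

Fixpoint address_prefix (y : Y) (M : nat) : list nat :=
  match M with
  | O => []
  | S M' => address_prefix y M' ++ [next_digit (address_prefix y M') y]
  end.

Definition address (y : Y) (i : nat) : nat := next_digit (address_prefix y i) y.

Lemma address_prefix_take_seq y M : address_prefix y M = take_seq (address y) M.
Proof. induction M as [|M IH]; [reflexivity|]. simpl. rewrite take_seq_S, <- IH. reflexivity. Qed.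

Lemma next_digit_spec s y : scheme s y -> scheme (s ++ [next_digit s y]) y.
Proof. intros Hs. apply (epsilon_spec (inhabits 0%nat) (fun k => scheme (s ++ [k]) y)), scheme_cover, Hs. Qed.

Lemma scheme_address_prefix y M : scheme (address_prefix y M) y.
Proof. induction M as [|M IH]; [apply scheme_nil|]. apply next_digit_spec, IH. Qed.

Lemma scheme_eq_address_prefix s y : scheme s y -> s = address_prefix y (length s).
Proof.
  induction s as [|k s IH] using rev_ind; intros H; [reflexivity|].
  rewrite length_app, Nat.add_1_r. simpl. rewrite <- (IH (scheme_nested _ _ _ H)).
  f_equal. f_equal. apply (scheme_disjoint s k _ y H), next_digit_spec, (scheme_nested _ _ _ H).
Qed.

Lemma cylinder_address s y : cylinder address s y <-> scheme s y.
Proof.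
  unfold cylinder. rewrite <- address_prefix_take_seq. split.
  - intros <-. apply scheme_address_prefix.
  - intros H. symmetry. apply scheme_eq_address_prefix, H.
Qed.

Lemma address_coding : coding op address.
Proof.
  split; [|split].
  - intros y y' E. destruct (scheme_point (address y)) as [z [_ Hz]].
    assert (Hin : forall y0, address y0 = address y -> forall M, scheme (take_seq (address y) M) y0).
    { intros y0 E0 M. apply cylinder_address, cylinder_take_seq. rewrite E0. intros i _. reflexivity. }
    rewrite <- (Hz y (Hin y eq_refl)), <- (Hz y' (Hin y' (eq_sym E))). reflexivity.
  - intros a. destruct (scheme_point a) as [y [Hy _]]. exists y. extensionality i.
    apply (proj1 (cylinder_take_seq address a (S i) y) (proj2 (cylinder_address _ y) (Hy (S i)))).
    lia.
  - intros s. replace (cylinder address s) with (scheme s); [apply scheme_open|].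
    extensionality y. apply propositional_extensionality. symmetry. apply cylinder_address.
Qed.

Lemma address_odd_digit_nbhds : odd_digit_nbhds op address.
Proof.
  intros y V HV Hy. destruct (scheme_odd_nbhds y V HV Hy) as [N HN]. exists N. intros j Hj.
  destruct (HN j Hj (take_seq (address y) (S (2 * j)))) as [K HK].
  - apply take_seq_length.
  - rewrite <- address_prefix_take_seq. apply scheme_address_prefix.
  - exists K. intros y' Hagree Hk. apply (HK (address y' (S (2 * j)))); [exact Hk|].
    apply cylinder_address, cylinder_snoc. rewrite take_seq_length. split; [|reflexivity].
    apply cylinder_take_seq. exact Hagree.
Qed.

Theorem scheme_odd_digit_coding : has_odd_digit_coding op.
Proof. exists address. split; [exact address_coding|exact address_odd_digit_nbhds]. Qed.

End NestedScheme.

(** * Farey intervals *)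

(* [Farey q1 p1 q2 p2] stands for the interval [[p1/q1, p2/q2)]. *)
Record farey := Farey { q1 : Z; p1 : Z; q2 : Z; p2 : Z }.

Definition farey_ok (F : farey) : Prop :=
  (0 < q1 F)%Z /\ (0 < q2 F)%Z /\ (q1 F * p2 F - q2 F * p1 F = 1)%Z.

Definition lo (F : farey) : R := IZR (p1 F) / IZR (q1 F).
Definition hi (F : farey) : R := IZR (p2 F) / IZR (q2 F).
Definition in_farey (F : farey) (x : R) : Prop := lo F <= x < hi F.

Definition mediant (F : farey) (a b : Z) : R :=
  IZR (a * p1 F + b * p2 F) / IZR (a * q1 F + b * q2 F).

Definition refine (F : farey) (a1 b1 a2 b2 : Z) : farey :=
  Farey (a1 * q1 F + b1 * q2 F) (a1 * p1 F + b1 * p2 F) (a2 * q1 F + b2 * q2 F) (a2 * p1 F + b2 * p2 F).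

Definition unimodular (a1 b1 a2 b2 : Z) : Prop :=
  (0 <= a1)%Z /\ (0 <= b1)%Z /\ (0 <= a2)%Z /\ (0 <= b2)%Z /\ (a1 * b2 - a2 * b1 = 1)%Z.

Lemma mediant_1_0 F : mediant F 1 0 = lo F.
Proof. unfold mediant, lo. f_equal; f_equal; ring. Qed.

Lemma mediant_0_1 F : mediant F 0 1 = hi F.
Proof. unfold mediant, hi. f_equal; f_equal; ring. Qed.

Lemma mediant_sub F a b a' b' : farey_ok F ->
  (0 < a * q1 F + b * q2 F)%Z -> (0 < a' * q1 F + b' * q2 F)%Z ->
  mediant F a' b' - mediant F a b =
  IZR (a * b' - a' * b) / (IZR (a * q1 F + b * q2 F) * IZR (a' * q1 F + b' * q2 F)).
Proof.
  destruct F as [x1 y1 x2 y2]. unfold farey_ok, mediant. simpl. intros [_ [_ Hdet]] P1 P2.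
  assert (E : ((a' * y1 + b' * y2) * (a * x1 + b * x2) - (a * y1 + b * y2) * (a' * x1 + b' * x2)
              = (a * b' - a' * b) * (x1 * y2 - x2 * y1))%Z) by ring.
  rewrite Hdet, Z.mul_1_r in E. rewrite <- E, minus_IZR, !mult_IZR.
  apply IZR_lt in P1, P2. field. lra.
Qed.

Lemma mediant_le F a b a' b' : farey_ok F ->
  (0 < a * q1 F + b * q2 F)%Z -> (0 < a' * q1 F + b' * q2 F)%Z -> (0 <= a * b' - a' * b)%Z ->
  mediant F a b <= mediant F a' b'.
Proof.
  intros Hok P1 P2 D. pose proof (mediant_sub F a b a' b' Hok P1 P2) as E.
  apply IZR_lt in P1, P2. apply IZR_le in D.
  assert (0 <= IZR (a * b' - a' * b) / (IZR (a * q1 F + b * q2 F) * IZR (a' * q1 F + b' * q2 F))).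
  { apply Rmult_le_pos; [exact D|]. left. apply Rinv_0_lt_compat, Rmult_lt_0_compat; assumption. }
  lra.
Qed.

Lemma mediant_lt F a b a' b' : farey_ok F ->
  (0 < a * q1 F + b * q2 F)%Z -> (0 < a' * q1 F + b' * q2 F)%Z -> (0 < a * b' - a' * b)%Z ->
  mediant F a b < mediant F a' b'.
Proof.
  intros Hok P1 P2 D. pose proof (mediant_sub F a b a' b' Hok P1 P2) as E.
  apply IZR_lt in P1, P2, D.
  assert (0 < IZR (a * b' - a' * b) / (IZR (a * q1 F + b * q2 F) * IZR (a' * q1 F + b' * q2 F))).
  { apply Rdiv_lt_0_compat; [exact D|]. apply Rmult_lt_0_compat; assumption. }
  lra.
Qed.

Lemma farey_lo_lt_hi F : farey_ok F -> lo F < hi F.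
Proof.
  intros Hok. pose proof Hok as [H1 [H2 _]].
  rewrite <- mediant_1_0, <- mediant_0_1. apply mediant_lt; auto; lia.
Qed.

Lemma farey_length F : farey_ok F -> hi F - lo F <= / IZR (q1 F + q2 F - 1).
Proof.
  intros Hok. pose proof Hok as [H1 [H2 _]].
  rewrite <- mediant_1_0, <- mediant_0_1, mediant_sub by (auto; lia).
  replace (1 * 1 - 0 * 0)%Z with 1%Z by ring. unfold Rdiv. rewrite Rmult_1_l, <- mult_IZR.
  apply Rinv_le_contravar; apply IZR_le || apply IZR_lt; nia.
Qed.

Lemma unimodular_diag a1 b1 a2 b2 : unimodular a1 b1 a2 b2 -> (1 <= a1)%Z /\ (1 <= b2)%Z.
Proof. intros [C1 [C2 [C3 [C4 C5]]]]. split; nia. Qed.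

Lemma lo_refine F a1 b1 a2 b2 : lo (refine F a1 b1 a2 b2) = mediant F a1 b1.
Proof. reflexivity. Qed.

Lemma hi_refine F a1 b1 a2 b2 : hi (refine F a1 b1 a2 b2) = mediant F a2 b2.
Proof. reflexivity. Qed.

Lemma refine_ok F a1 b1 a2 b2 : farey_ok F -> unimodular a1 b1 a2 b2 -> farey_ok (refine F a1 b1 a2 b2).
Proof.
  destruct F as [x1 y1 x2 y2]. unfold farey_ok, unimodular, refine. simpl.
  intros [H1 [H2 H3]] C. destruct (unimodular_diag _ _ _ _ C) as [D1 D2].
  destruct C as [C1 [C2 [C3 [C4 C5]]]]. split; [nia|split; [nia|]].
  replace 1%Z with ((a1 * b2 - a2 * b1) * (x1 * y2 - x2 * y1))%Z by (rewrite C5, H3; ring). ring.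
Qed.

Lemma refine_lo_le F a1 b1 a2 b2 : farey_ok F -> unimodular a1 b1 a2 b2 ->
  lo F <= lo (refine F a1 b1 a2 b2).
Proof.
  intros Hok C. pose proof Hok as [H1 [H2 _]]. destruct (unimodular_diag _ _ _ _ C) as [D1 D2].
  destruct C as [C1 [C2 [C3 [C4 C5]]]].
  rewrite lo_refine, <- mediant_1_0. apply mediant_le; auto; nia.
Qed.

Lemma refine_lo_lt F a1 b1 a2 b2 : farey_ok F -> unimodular a1 b1 a2 b2 -> (0 < b1)%Z ->
  lo F < lo (refine F a1 b1 a2 b2).
Proof.
  intros Hok C Hb1. pose proof Hok as [H1 [H2 _]]. destruct (unimodular_diag _ _ _ _ C) as [D1 D2].
  destruct C as [C1 [C2 [C3 [C4 C5]]]].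
  rewrite lo_refine, <- mediant_1_0. apply mediant_lt; auto; nia.
Qed.

Lemma refine_hi_lt F a1 b1 a2 b2 : farey_ok F -> unimodular a1 b1 a2 b2 -> (0 < a2)%Z ->
  hi (refine F a1 b1 a2 b2) < hi F.
Proof.
  intros Hok C Ha2. pose proof Hok as [H1 [H2 _]]. destruct (unimodular_diag _ _ _ _ C) as [D1 D2].
  destruct C as [C1 [C2 [C3 [C4 C5]]]].
  rewrite hi_refine, <- mediant_0_1. apply mediant_lt; auto; nia.
Qed.

Lemma refine_den F a1 b1 a2 b2 : farey_ok F -> unimodular a1 b1 a2 b2 -> (0 < a2)%Z ->
  (q1 F + q2 F + 1 <= q1 (refine F a1 b1 a2 b2) + q2 (refine F a1 b1 a2 b2))%Z.
Proof.
  intros [H1 [H2 _]] C Ha2. destruct (unimodular_diag _ _ _ _ C) as [D1 D2].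
  destruct C as [C1 [C2 [C3 [C4 C5]]]]. simpl. nia.
Qed.

(* The one-sided sons [[mediant F 1 k, mediant F 1 (k+1))] tile [[lo F, hi F)] and accumulate
   at [hi F]; the two-sided sons tile [(lo F, hi F)], those of even index accumulating at [hi F]
   and those of odd index at [lo F]. *)
Definition farey_son (two_sided : bool) (F : farey) (k : nat) : farey :=
  let j := Z.of_nat (Nat.div2 k) in
  if two_sided then
    if Nat.even k then refine F 1 (j + 1) 1 (j + 2) else refine F (j + 2) 1 (j + 1) 1
  else refine F 1 (Z.of_nat k) 1 (Z.of_nat k + 1).

Lemma farey_son_even F j :
  farey_son true F (2 * j) = refine F 1 (Z.of_nat j + 1) 1 (Z.of_nat j + 2).
Proof. unfold farey_son. rewrite Nat.even_even, Nat.div2_double. reflexivity. Qed.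

Lemma farey_son_odd F j :
  farey_son true F (2 * j + 1) = refine F (Z.of_nat j + 2) 1 (Z.of_nat j + 1) 1.
Proof. unfold farey_son. rewrite Nat.even_odd, Nat.div2_odd'. reflexivity. Qed.

Lemma farey_son_refine b F k : exists a1 b1 a2 b2,
  farey_son b F k = refine F a1 b1 a2 b2 /\ unimodular a1 b1 a2 b2 /\ (0 < a2)%Z /\
  (b = true -> (0 < b1)%Z).
Proof.
  unfold farey_son, unimodular. generalize (Nat.div2 k) as q; intros q.
  destruct b; [destruct (Nat.even k)|];
    (eexists _, _, _, _; split; [reflexivity|]);
    (split; [repeat split; lia|]); (split; [lia|]); intros Hb; (discriminate || lia).
Qed.

Lemma farey_son_ok b F k : farey_ok F -> farey_ok (farey_son b F k).
Proof. intros Hok. destruct (farey_son_refine b F k) as (a1 & b1 & a2 & b2 & -> & C & _). apply refine_ok; auto. Qed.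

Lemma farey_son_lo_le b F k : farey_ok F -> lo F <= lo (farey_son b F k).
Proof. intros Hok. destruct (farey_son_refine b F k) as (a1 & b1 & a2 & b2 & -> & C & _). apply refine_lo_le; auto. Qed.

Lemma farey_son_lo_lt F k : farey_ok F -> lo F < lo (farey_son true F k).
Proof.
  intros Hok. destruct (farey_son_refine true F k) as (a1 & b1 & a2 & b2 & -> & C & _ & Hb1).
  apply refine_lo_lt; auto.
Qed.

Lemma farey_son_hi_lt b F k : farey_ok F -> hi (farey_son b F k) < hi F.
Proof.
  intros Hok. destruct (farey_son_refine b F k) as (a1 & b1 & a2 & b2 & -> & C & Ha2 & _).
  apply refine_hi_lt; auto.
Qed.

Lemma farey_son_den b F k : farey_ok F ->
  (q1 F + q2 F + 1 <= q1 (farey_son b F k) + q2 (farey_son b F k))%Z.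
Proof.
  intros Hok. destruct (farey_son_refine b F k) as (a1 & b1 & a2 & b2 & -> & C & Ha2 & _).
  apply refine_den; auto.
Qed.

Lemma in_farey_son b F k x : farey_ok F -> in_farey (farey_son b F k) x -> in_farey F x.
Proof.
  intros Hok [H1 H2]. pose proof (farey_son_lo_le b F k Hok). pose proof (farey_son_hi_lt b F k Hok).
  split; lra.
Qed.

Lemma farey_son_separated b F k k' : farey_ok F -> k <> k' ->
  hi (farey_son b F k) <= lo (farey_son b F k') \/ hi (farey_son b F k') <= lo (farey_son b F k).
Proof.
  intros Hok Hne. pose proof Hok as [H1 [H2 _]].
  assert (Hsep : forall a1 b1 a2 b2, (0 <= a1)%Z -> (0 <= b1)%Z -> (0 <= a2)%Z -> (0 <= b2)%Z ->
            (0 < a1 + b1)%Z -> (0 < a2 + b2)%Z -> (0 <= a1 * b2 - a2 * b1)%Z ->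
            mediant F a1 b1 <= mediant F a2 b2) by (intros; apply mediant_le; auto; nia).
  destruct b.
  - destruct (Nat.Even_or_Odd k) as [[j ->]|[j ->]];
      destruct (Nat.Even_or_Odd k') as [[j' ->]|[j' ->]];
      rewrite ?farey_son_even, ?farey_son_odd, !hi_refine, !lo_refine.
    + destruct (Nat.lt_ge_cases j j'); [left|right]; apply Hsep; nia.
    + right. apply Hsep; nia.
    + left. apply Hsep; nia.
    + destruct (Nat.lt_ge_cases j j'); [right|left]; apply Hsep; nia.
  - unfold farey_son. rewrite !hi_refine, !lo_refine.
    destruct (Nat.lt_ge_cases k k'); [left|right]; apply Hsep; nia.
Qed.

Lemma farey_son_disjoint b F k k' x : farey_ok F ->
  in_farey (farey_son b F k) x -> in_farey (farey_son b F k') x -> k = k'.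
Proof.
  intros Hok [H1 H2] [H3 H4]. destruct (Nat.eq_dec k k') as [|Hne]; [assumption|].
  destruct (farey_son_separated b F k k' Hok Hne); lra.
Qed.

Lemma small_inv eps : 0 < eps -> exists k : nat, forall P : Z, (Z.of_nat k < P)%Z -> / IZR P < eps.
Proof.
  intros He. destruct (archimed (/ eps)) as [H1 _].
  exists (Z.to_nat (up (/ eps))). intros P HP.
  assert (HP' : (up (/ eps) < P)%Z) by lia. apply IZR_lt in HP'.
  assert (0 < / eps) by (apply Rinv_0_lt_compat; exact He).
  rewrite <- (Rinv_inv eps). apply Rinv_lt_contravar; [apply Rmult_lt_0_compat|]; lra.
Qed.

Lemma exists_step_up (u : nat -> R) x : u 0%nat <= x -> (exists k, x < u k) ->
  exists j, u j <= x < u (S j).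
Proof.
  intros H0 [k Hk]. induction k as [|k IH]; [lra|].
  destruct (Rlt_or_le x (u k)) as [Hl|Hl]; eauto.
Qed.

Lemma exists_step_down (w : nat -> R) x : x < w 0%nat -> (exists k, w k <= x) ->
  exists j, w (S j) <= x < w j.
Proof.
  intros H0 [k Hk]. induction k as [|k IH]; [lra|].
  destruct (Rle_or_lt (w k) x) as [Hl|Hl]; eauto.
Qed.

Lemma mediant_gap F a b a' b' : farey_ok F ->
  (0 < a * q1 F + b * q2 F)%Z -> (0 < a' * q1 F + b' * q2 F)%Z -> (a * b' - a' * b = 1)%Z ->
  mediant F a' b' - mediant F a b = / IZR ((a * q1 F + b * q2 F) * (a' * q1 F + b' * q2 F)).
Proof.
  intros Hok P1 P2 D. rewrite mediant_sub, D, mult_IZR by assumption. unfold Rdiv. ring.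
Qed.

Lemma approach_hi F x : farey_ok F -> x < hi F -> exists k : nat, x < mediant F 1 (Z.of_nat k).
Proof.
  intros Hok Hx. pose proof Hok as [H1 [H2 _]].
  destruct (small_inv (hi F - x) ltac:(lra)) as [k Hk]. exists k.
  pose proof (mediant_gap F 1 (Z.of_nat k) 0 1 Hok ltac:(nia) ltac:(nia) ltac:(ring)) as E.
  rewrite mediant_0_1 in E.
  assert (0 <= (q1 F + Z.of_nat k * q2 F) * (q2 F - 1))%Z by (apply Z.mul_nonneg_nonneg; nia).
  assert (Hbig : (Z.of_nat k < (1 * q1 F + Z.of_nat k * q2 F) * (0 * q1 F + 1 * q2 F))%Z) by nia.
  specialize (Hk _ Hbig). lra.
Qed.

Lemma approach_lo F x : farey_ok F -> lo F < x -> exists k : nat, mediant F (Z.of_nat k + 1) 1 < x.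
Proof.
  intros Hok Hx. pose proof Hok as [H1 [H2 _]].
  destruct (small_inv (x - lo F) ltac:(lra)) as [k Hk]. exists k.
  pose proof (mediant_gap F 1 0 (Z.of_nat k + 1) 1 Hok ltac:(nia) ltac:(nia) ltac:(ring)) as E.
  rewrite mediant_1_0 in E.
  assert (0 <= ((Z.of_nat k + 1) * q1 F + q2 F) * (q1 F - 1))%Z by (apply Z.mul_nonneg_nonneg; nia).
  assert (Hbig : (Z.of_nat k < (1 * q1 F + 0 * q2 F) * ((Z.of_nat k + 1) * q1 F + 1 * q2 F))%Z) by nia.
  specialize (Hk _ Hbig). lra.
Qed.

Lemma cover_right F x : farey_ok F -> in_farey F x -> exists k, in_farey (farey_son false F k) x.
Proof.
  intros Hok [Hl Hh].
  destruct (exists_step_up (fun k => mediant F 1 (Z.of_nat k)) x) as [j Hj].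
  - cbn [Z.of_nat]. rewrite mediant_1_0. exact Hl.
  - apply approach_hi; assumption.
  - exists j. unfold in_farey, farey_son. rewrite lo_refine, hi_refine.
    rewrite Nat2Z.inj_succ in Hj. exact Hj.
Qed.

Lemma cover_two_sided F x : farey_ok F -> lo F < x < hi F ->
  exists k, in_farey (farey_son true F k) x.
Proof.
  intros Hok [Hl Hh]. pose proof Hok as [H1 [H2 _]].
  destruct (Rle_or_lt (mediant F 1 1) x) as [Hm|Hm].
  - destruct (exists_step_up (fun j => mediant F 1 (Z.of_nat j + 1)) x) as [j Hj].
    + exact Hm.
    + destruct (approach_hi F x Hok Hh) as [k Hk]. exists k.
      eapply Rlt_le_trans; [exact Hk|]. apply mediant_le; auto; nia.
    + exists (2 * j)%nat. unfold in_farey. rewrite farey_son_even, lo_refine, hi_refine.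
      rewrite Nat2Z.inj_succ in Hj. replace (Z.of_nat j + 2)%Z with (Z.succ (Z.of_nat j) + 1)%Z by lia.
      exact Hj.
  - destruct (exists_step_down (fun j => mediant F (Z.of_nat j + 1) 1) x) as [j Hj].
    + exact Hm.
    + destruct (approach_lo F x Hok Hl) as [k Hk]. exists k. lra.
    + exists (2 * j + 1)%nat. unfold in_farey. rewrite farey_son_odd, lo_refine, hi_refine.
      rewrite Nat2Z.inj_succ in Hj. replace (Z.of_nat j + 2)%Z with (Z.succ (Z.of_nat j) + 1)%Z by lia.
      exact Hj.
Qed.

Lemma farey_lo_rational F : farey_ok F -> ~ irrational (lo F).
Proof.
  intros [H1 _] Hirr. apply Hirr. exists (Qmake (p1 F) (Z.to_pos (q1 F))).
  unfold Q2R, lo. simpl. rewrite Z2Pos.id by exact H1. reflexivity.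
Qed.

Lemma div_lt_cross a b c d : 0 < b -> 0 < d -> a / b < c / d -> a * d < c * b.
Proof.
  intros Hb Hd H. replace (a * d) with (a / b * (b * d)) by (field; lra).
  replace (c * b) with (c / d * (b * d)) by (field; lra).
  apply Rmult_lt_compat_r; [apply Rmult_lt_0_compat|]; assumption.
Qed.

Lemma farey_rational_den F q : farey_ok F -> lo F < Q2R q -> Q2R q < hi F ->
  (q1 F + q2 F <= Z.pos (Qden q))%Z.
Proof.
  destruct F as [x1 y1 x2 y2]. unfold farey_ok, lo, hi, Q2R. simpl. intros [H1 [H2 H3]] L U.
  set (P := Qnum q) in *. set (D := Z.pos (Qden q)) in *. assert (HD : (0 < D)%Z) by (unfold D; lia).
  fold (IZR P / IZR D) in L, U.
  apply div_lt_cross in L, U; try (apply IZR_lt; assumption).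
  rewrite <- !mult_IZR in L, U. apply lt_IZR in L, U.
  assert (E : (x2 * (P * x1 - y1 * D) + x1 * (y2 * D - P * x2) = D * (x1 * y2 - x2 * y1))%Z) by ring.
  rewrite H3 in E. nia.
Qed.

(** * The Sorgenfrey line and its irrationals *)

Definition z_of_code (k : nat) : Z :=
  if Nat.even k then Z.of_nat (Nat.div2 k) else (- Z.of_nat (Nat.div2 k) - 1)%Z.

Lemma z_of_code_even j : z_of_code (2 * j) = Z.of_nat j.
Proof. unfold z_of_code. rewrite Nat.even_even, Nat.div2_double. reflexivity. Qed.

Lemma z_of_code_odd j : z_of_code (2 * j + 1) = (- Z.of_nat j - 1)%Z.
Proof. unfold z_of_code. rewrite Nat.even_odd, Nat.div2_odd'. reflexivity. Qed.

Lemma z_of_code_surj z : exists k, z_of_code k = z.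
Proof.
  destruct (Z.le_gt_cases 0 z).
  - exists (2 * Z.to_nat z)%nat. rewrite z_of_code_even. lia.
  - exists (2 * (Z.to_nat (- z) - 1) + 1)%nat. rewrite z_of_code_odd. lia.
Qed.

Lemma z_of_code_inj k k' : z_of_code k = z_of_code k' -> k = k'.
Proof.
  destruct (Nat.Even_or_Odd k) as [[j ->]|[j ->]]; destruct (Nat.Even_or_Odd k') as [[j' ->]|[j' ->]];
    rewrite ?z_of_code_even, ?z_of_code_odd; lia.
Qed.

Definition unit_farey (k : nat) : farey := Farey 1 (z_of_code k) 1 (z_of_code k + 1).

Lemma unit_farey_ok k : farey_ok (unit_farey k).
Proof. unfold farey_ok, unit_farey. cbn [q1 q2 p1 p2]. lia. Qed.

Lemma in_unit_farey k x :
  in_farey (unit_farey k) x <-> IZR (z_of_code k) <= x < IZR (z_of_code k) + 1.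
Proof. unfold in_farey, lo, hi. simpl. rewrite !Rdiv_1_r, plus_IZR. reflexivity. Qed.

Section FareyScheme.
Variable two_sided : nat -> bool.

Fixpoint descend (depth : nat) (F : farey) (t : list nat) : farey :=
  match t with
  | [] => F
  | k :: t' => descend (S depth) (farey_son (two_sided depth) F k) t'
  end.

Definition farey_node (k : nat) (t : list nat) : farey := descend 1 (unit_farey k) t.

Definition farey_scheme (s : list nat) (x : R) : Prop :=
  match s with [] => True | k :: t => in_farey (farey_node k t) x end.

Lemma descend_ok depth F t : farey_ok F -> farey_ok (descend depth F t).
Proof.
  revert depth F. induction t as [|k t IH]; intros depth F H; [exact H|].
  apply IH, farey_son_ok, H.
Qed.

Lemma descend_den depth F t : farey_ok F ->
  (q1 F + q2 F + Z.of_nat (length t) <= q1 (descend depth F t) + q2 (descend depth F t))%Z.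
Proof.
  revert depth F. induction t as [|k t IH]; intros depth F H; simpl; [lia|].
  pose proof (farey_son_den (two_sided depth) F k H).
  pose proof (IH (S depth) _ (farey_son_ok (two_sided depth) F k H)). lia.
Qed.

Lemma descend_snoc depth F t k :
  descend depth F (t ++ [k]) = farey_son (two_sided (depth + length t)) (descend depth F t) k.
Proof.
  revert depth F. induction t as [|k' t IH]; intros depth F; simpl.
  - rewrite Nat.add_0_r. reflexivity.
  - rewrite IH, Nat.add_succ_r. reflexivity.
Qed.

Lemma farey_node_ok k t : farey_ok (farey_node k t).
Proof. apply descend_ok, unit_farey_ok. Qed.

Lemma farey_node_den k t : (Z.of_nat (length t) + 2 <= q1 (farey_node k t) + q2 (farey_node k t))%Z.
Proof.
  pose proof (descend_den 1 (unit_farey k) t (unit_farey_ok k)) as Hden.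
  cbn [unit_farey q1 q2] in Hden. unfold farey_node. lia.
Qed.

Lemma farey_node_snoc k t k' :
  farey_node k (t ++ [k']) = farey_son (two_sided (S (length t))) (farey_node k t) k'.
Proof. apply descend_snoc. Qed.

Lemma farey_scheme_cover s x : (forall d, two_sided d = true -> irrational x) ->
  farey_scheme s x -> exists k, farey_scheme (s ++ [k]) x.
Proof.
  intros Hirr Hs. destruct s as [|k0 t]; cbn [app farey_scheme] in Hs |- *.
  - destruct (z_of_code_surj (up x - 1)) as [k Hk]. exists k.
    change (in_farey (unit_farey k) x). apply in_unit_farey.
    rewrite Hk, minus_IZR. destruct (archimed x). lra.
  - pose proof (farey_node_ok k0 t) as Hok.
    assert (Hson : exists k, in_farey (farey_son (two_sided (S (length t))) (farey_node k0 t) k) x).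
    { destruct (two_sided (S (length t))) eqn:E; [|apply cover_right; assumption].
      apply cover_two_sided; [assumption|]. split; [|apply Hs].
      destruct Hs as [[Hlt|Heq] _]; [exact Hlt|].
      exfalso. apply (farey_lo_rational _ Hok). rewrite Heq. apply (Hirr _ E). }
    destruct Hson as [k Hk]. exists k. rewrite farey_node_snoc. exact Hk.
Qed.

Lemma farey_scheme_disjoint s k k' x :
  farey_scheme (s ++ [k]) x -> farey_scheme (s ++ [k']) x -> k = k'.
Proof.
  destruct s as [|k0 t]; cbn [app farey_scheme].
  - change (in_farey (unit_farey k) x -> in_farey (unit_farey k') x -> k = k').
    rewrite !in_unit_farey. intros [H1 H2] [H3 H4]. apply z_of_code_inj.
    assert (z_of_code k < z_of_code k' + 1)%Z by (apply lt_IZR; rewrite plus_IZR; lra).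
    assert (z_of_code k' < z_of_code k + 1)%Z by (apply lt_IZR; rewrite plus_IZR; lra). lia.
  - rewrite !farey_node_snoc. apply farey_son_disjoint, farey_node_ok.
Qed.

Lemma farey_scheme_nested s k x : farey_scheme (s ++ [k]) x -> farey_scheme s x.
Proof.
  destruct s as [|k0 t]; cbn [app farey_scheme]; [intros _; exact I|].
  rewrite farey_node_snoc. apply in_farey_son, farey_node_ok.
Qed.

Lemma farey_scheme_sorg_open s : sorg_open (farey_scheme s).
Proof.
  destruct s as [|k t]; intros x Hx.
  - exists x, (x + 1). split; [lra|]. intros; exact I.
  - exists (lo (farey_node k t)), (hi (farey_node k t)). split; [exact Hx|]. intros y Hy. exact Hy.
Qed.

Definition branch_node (a : nat -> nat) (m : nat) : farey :=
  farey_node (a 0%nat) (take_seq (fun i => a (S i)) m).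

Lemma farey_scheme_take_seq a m x :
  farey_scheme (take_seq a (S m)) x <-> in_farey (branch_node a m) x.
Proof. rewrite take_seq_cons. reflexivity. Qed.

Lemma branch_node_S a m :
  branch_node a (S m) = farey_son (two_sided (S m)) (branch_node a m) (a (S m)).
Proof. unfold branch_node. rewrite take_seq_S, farey_node_snoc, take_seq_length. reflexivity. Qed.

Lemma branch_node_ok a m : farey_ok (branch_node a m).
Proof. apply farey_node_ok. Qed.

Lemma branch_node_den a m : (Z.of_nat m + 2 <= q1 (branch_node a m) + q2 (branch_node a m))%Z.
Proof.
  pose proof (farey_node_den (a 0%nat) (take_seq (fun i => a (S i)) m)) as Hden.
  rewrite take_seq_length in Hden. exact Hden.
Qed.

Lemma branch_node_lo_mono a m m' : (m <= m')%nat -> lo (branch_node a m) <= lo (branch_node a m').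
Proof.
  induction 1 as [|m' _ IH]; [lra|]. rewrite branch_node_S.
  pose proof (farey_son_lo_le (two_sided (S m')) _ (a (S m')) (branch_node_ok a m')). lra.
Qed.

Lemma branch_node_hi_mono a m m' : (m <= m')%nat -> hi (branch_node a m') <= hi (branch_node a m).
Proof.
  induction 1 as [|m' _ IH]; [lra|]. rewrite branch_node_S.
  pose proof (farey_son_hi_lt (two_sided (S m')) _ (a (S m')) (branch_node_ok a m')). lra.
Qed.

Lemma farey_scheme_branch a x :
  (forall M, farey_scheme (take_seq a M) x) <-> forall m, in_farey (branch_node a m) x.
Proof.
  split.
  - intros H m. apply farey_scheme_take_seq, H.
  - intros H [|m]; [exact I|]. apply farey_scheme_take_seq, H.
Qed.

Lemma branch_point_unique a x x' : (forall m, in_farey (branch_node a m) x) ->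
  (forall m, in_farey (branch_node a m) x') -> x = x'.
Proof.
  intros H H'. destruct (Req_dec x x') as [|Hne]; [assumption|]. exfalso.
  destruct (small_inv (Rabs (x - x'))) as [m Hm]; [apply Rabs_pos_lt; lra|].
  destruct (H m) as [A1 A2]. destruct (H' m) as [B1 B2].
  pose proof (farey_length _ (branch_node_ok a m)). pose proof (branch_node_den a m).
  specialize (Hm (q1 (branch_node a m) + q2 (branch_node a m) - 1)%Z ltac:(lia)).
  assert (Rabs (x - x') < hi (branch_node a m) - lo (branch_node a m)) by (apply Rabs_def1; lra).
  lra.
Qed.

Lemma branch_point_exists a : exists c, forall m, in_farey (branch_node a m) c.
Proof.
  set (E := fun z => exists m, z = lo (branch_node a m)).
  assert (Hub : forall m, is_upper_bound E (hi (branch_node a m))).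
  { intros m z [m' ->]. destruct (Nat.le_ge_cases m m') as [Hle|Hle].
    - pose proof (farey_lo_lt_hi _ (branch_node_ok a m')). pose proof (branch_node_hi_mono a m m' Hle). lra.
    - pose proof (farey_lo_lt_hi _ (branch_node_ok a m)). pose proof (branch_node_lo_mono a m' m Hle). lra. }
  destruct (completeness E) as [c [Hc1 Hc2]].
  - exists (hi (branch_node a 0)). apply Hub.
  - exists (lo (branch_node a 0)), 0%nat. reflexivity.
  - exists c. intros m. split; [apply Hc1; exists m; reflexivity|].
    pose proof (Hc2 _ (Hub (S m))) as Hc. rewrite branch_node_S in Hc.
    pose proof (farey_son_hi_lt (two_sided (S m)) _ (a (S m)) (branch_node_ok a m)). lra.
Qed.

(* A rational point would lie strictly inside the nodes below two-sided splits, whose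
   denominators are unbounded. *)
Lemma branch_point_irrational a c : (forall m, two_sided (S (S (2 * m))) = true) ->
  (forall m, in_farey (branch_node a m) c) -> irrational c.
Proof.
  intros Hts Hc [q Hq].
  assert (Hlo : forall m, lo (branch_node a m) < c).
  { intros m. destruct (Hc (S (S (2 * m)))) as [Hc' _]. rewrite branch_node_S, Hts in Hc'.
    pose proof (farey_son_lo_lt (branch_node a (S (2 * m))) (a (S (S (2 * m)))) (branch_node_ok _ _)).
    pose proof (branch_node_lo_mono a m (S (2 * m)) ltac:(lia)). lra. }
  set (m := Pos.to_nat (Qden q)).
  pose proof (farey_rational_den (branch_node a m) q (branch_node_ok a m)
                ltac:(rewrite <- Hq; apply Hlo) ltac:(rewrite <- Hq; apply Hc)).
  pose proof (branch_node_den a m). unfold m in *. lia.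
Qed.

Lemma farey_scheme_right_nbhd (right_at_odd : forall j, two_sided (S (2 * j)) = false) b x :
  x < b -> exists N, forall j, (N <= j)%nat -> forall s, length s = S (2 * j) -> farey_scheme s x ->
    exists K, forall k x', (K <= k)%nat -> farey_scheme (s ++ [k]) x' -> x <= x' < b.
Proof.
  intros Hxb. destruct (small_inv (b - x) ltac:(lra)) as [N HN]. exists N. intros j Hj s Hl Hs.
  destruct s as [|k0 t]; [discriminate|].
  assert (Ht : length t = (2 * j)%nat) by (simpl in Hl; lia).
  pose proof (farey_node_ok k0 t) as Hok. pose proof (farey_node_den k0 t) as Hden.
  cbn [farey_scheme] in Hs. set (F := farey_node k0 t) in *.
  assert (Hshort : hi F - lo F < b - x).
  { eapply Rle_lt_trans; [apply farey_length, Hok|]. apply HN. lia. }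
  destruct Hs as [Hs1 Hs2]. destruct (approach_hi F x Hok Hs2) as [K HK].
  exists K. intros k x' Hk Hx'. cbn [app farey_scheme] in Hx'.
  rewrite farey_node_snoc, Ht, right_at_odd in Hx'. fold F in Hx'.
  pose proof (farey_son_hi_lt false F k Hok) as Hhi. unfold farey_son in Hx', Hhi.
  destruct Hx' as [Hlo Hup]. rewrite lo_refine in Hlo.
  assert (HKk : mediant F 1 (Z.of_nat K) <= mediant F 1 (Z.of_nat k)).
  { pose proof Hok as [H1 [H2 _]]. apply mediant_le; auto; nia. }
  split; lra.
Qed.

End FareyScheme.

Lemma sorg_open_right_interval V x : sorg_open V -> V x ->
  exists b, x < b /\ forall x', x <= x' < b -> V x'.
Proof.
  intros HV Hx. destruct (HV x Hx) as [a [b [Hab HabV]]].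
  exists b. split; [lra|]. intros x' Hx'. apply HabV. lra.
Qed.

Lemma sorgenfrey_odd_digit_coding : has_odd_digit_coding sorg_open.
Proof.
  apply (scheme_odd_digit_coding R sorg_open (farey_scheme (fun _ => false))).
  - intros x. exact I.
  - intros s x. apply farey_scheme_cover. discriminate.
  - apply farey_scheme_disjoint.
  - apply farey_scheme_nested.
  - intros a. destruct (branch_point_exists (fun _ => false) a) as [c Hc]. exists c. split.
    + apply farey_scheme_branch. exact Hc.
    + intros x' Hx'. apply (branch_point_unique (fun _ => false) a); [exact Hc|]. apply farey_scheme_branch, Hx'.
  - apply farey_scheme_sorg_open.
  - intros y V HV Hy. destruct (sorg_open_right_interval V y HV Hy) as [b [Hb HbV]].
    destruct (farey_scheme_right_nbhd (fun _ => false) (fun _ => eq_refl) b y Hb) as [N HN].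
    exists N. intros j Hj s Hl Hs. destruct (HN j Hj s Hl Hs) as [K HK].
    exists K. intros k y' Hk Hy'. apply HbV, (HK k); assumption.
Qed.

Lemma irrational_sorgenfrey_odd_digit_coding : has_odd_digit_coding irr_open.
Proof.
  apply (scheme_odd_digit_coding Irr irr_open (fun s y => farey_scheme Nat.even s (proj1_sig y))).
  - intros y. exact I.
  - intros s y. apply farey_scheme_cover. intros _ _. exact (proj2_sig y).
  - intros s k k' y. apply farey_scheme_disjoint.
  - intros s k y. apply farey_scheme_nested.
  - intros a. destruct (branch_point_exists Nat.even a) as [c Hc].
    assert (Hirr : irrational c).
    { apply (branch_point_irrational Nat.even a); [|exact Hc].
      intros m. rewrite Nat.even_succ_succ. apply Nat.even_even. }
    exists (exist _ c Hirr). split.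
    + apply farey_scheme_branch. exact Hc.
    + intros [x' hx'] Hx'. cbn [proj1_sig] in Hx'.
      assert (E : c = x') by (apply (branch_point_unique Nat.even a); [exact Hc|apply farey_scheme_branch, Hx']).
      subst x'. f_equal. apply proof_irrelevance.
  - intros s. exists (farey_scheme Nat.even s). split; [apply farey_scheme_sorg_open|reflexivity].
  - intros y V [U [HU HVU]] Hy. apply HVU in Hy.
    destruct (sorg_open_right_interval U _ HU Hy) as [b [Hb HbU]].
    assert (Hodd : forall j, Nat.even (S (2 * j)) = false)
      by (intros j; rewrite <- Nat.add_1_r; apply Nat.even_odd).
    destruct (farey_scheme_right_nbhd Nat.even Hodd b (proj1_sig y) Hb) as [N HN].
    exists N. intros j Hj s Hl Hs. destruct (HN j Hj s Hl Hs) as [K HK].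
    exists K. intros k y' Hk Hy'. apply HVU, HbU, (HK k); assumption.
Qed.

Theorem corollary21 :
  (forall n : nat, (1 <= n)%nat ->
     has_pi_tree (@prod_open (fin n) R sorg_open) /\
     has_pi_tree (@prod_open (fin n) Irr irr_open)) /\
  (has_pi_tree (@prod_open nat R sorg_open) /\
   has_pi_tree (@prod_open nat Irr irr_open)).
Proof.
  pose proof sorgenfrey_odd_digit_coding as HR.
  pose proof irrational_sorgenfrey_odd_digit_coding as HI.
  split.
  - intros n Hn. split; apply fin_power_pi_tree; assumption.
  - split; apply nat_power_pi_tree; assumption.
Qed.
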